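(* Let $\mathcal E$ be a nest on a complex Banach space $X$ and let $E\in\mathcal E$. Then the weak*-closure in $X^*$ of $\operatorname{span}\{N^\perp: N\in\mathcal E,\ N_+\supsetneq E\}$ equals $E^\perp$.
   Context: A nest $\mathcal E$ on $X$ is a family of closed linear subspaces of $X$, totally ordered by inclusion, containing $\{0\}$ and $X$, and closed under arbitrary meets $\wedge$ (intersections) and joins $\vee$ (norm-closed linear spans of unions). For $E\in\mathcal E$, $E_+=\wedge\{F\in\mathcal E: E\subsetneq F\}$ (with the empty meet equal to $X$). For $S\subseteq X$, $S^\perp=\{f\in X^*: f(s)=0\ \forall s\in S\}$. *)

From HB Require Import structures.
From mathcomp Require Import all_boot all_order all_algebra.
From mathcomp Require Import all_classical all_reals all_analysis.
From mathcomp Require Import complex.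
Import Order.TTheory GRing.Theory Num.Theory.
Import numFieldTopology.Exports numFieldNormedType.Exports.

Set Implicit Arguments.
Unset Strict Implicit.
Unset Printing Implicit Defensive.

Local Open Scope classical_set_scope.
Local Open Scope ring_scope.

(* The complex numbers over a real type R, seen as a numClosedFieldType so
   that mathcomp-analysis equips it with its norm topology. *)
Definition Cplx (R : realType) : numClosedFieldType := R[i].

Section Nests.
Variables (R : realType) (X : completeNormedModType (Cplx R)).

Definition lin_subspace (E : set X) : Prop :=
  E 0 /\ forall (a : Cplx R) (x y : X), E x -> E y -> E (a *: x + y).

Definition closed_subspace (E : set X) : Prop :=
  lin_subspace E /\ closed E.

Definition lspan (S : set X) : set X :=
  \bigcap_(F in [set F | lin_subspace F /\ S `<=` F]) F.

Definition nest_meet (F : set (set X)) : set X := \bigcap_(A in F) A.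

Definition nest_join (F : set (set X)) : set X :=
  closure (lspan (\bigcup_(A in F) A)).

Definition nest (N : set (set X)) : Prop :=
  (forall E, N E -> closed_subspace E) /\
  (forall E F, N E -> N F -> E `<=` F \/ F `<=` E) /\
  N [set 0] /\ N setT /\
  (forall F, F `<=` N -> N (nest_meet F)) /\
  (forall F, F `<=` N -> N (nest_join F)).

Definition nest_succ (N : set (set X)) (E : set X) : set X :=
  nest_meet [set F | N F /\ E `<` F].

Definition dual_elt (f : X -> Cplx R) : Prop :=
  (forall (a : Cplx R) (x y : X), f (a *: x + y) = a * f x + f y) /\
  continuous f.

Definition perp (S : set X) : set (X -> Cplx R) :=
  [set f | dual_elt f /\ forall s, S s -> f s = 0].

Definition fspan (S : set (X -> Cplx R)) : set (X -> Cplx R) :=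
  [set g | exists (n : nat) (c : 'I_n -> Cplx R) (f : 'I_n -> X -> Cplx R),
     (forall i, S (f i)) /\ g = (fun x => \sum_(i < n) c i * f i x)].

(* weak*-closure in X^* of a set S of functionals: the f in X^* every
   basic weak*-neighbourhood of which meets S *)
Definition wstar_closure (S : set (X -> Cplx R)) : set (X -> Cplx R) :=
  [set f | dual_elt f /\
     forall (n : nat) (xs : 'I_n -> X) (eps : Cplx R), 0 < eps ->
       exists g, S g /\ forall i, `|f (xs i) - g (xs i)| < eps].

End Nests.

(* Inclusion "<=": every generating functional vanishes on E (if E is
   strictly below N_+ then E <= N, by totality of the nest), and vanishing
   at a point survives weak*-limits.
   Inclusion ">=": a weak*-neighbourhood of f only sees finitely many points
   x_1..x_n, so by finite-dimensional linear algebra f lies in the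
   weak*-closure of a span S of functionals as soon as f vanishes at every
   point y annihilated by S.  Such a y must lie in E: otherwise some member
   M of the nest with E strictly below M_+ misses y, and the Hahn-Banach
   separation theorem produces a functional in M^perp (hence in S) which
   does not vanish at y. *)
From HB Require Import structures.
From mathcomp Require Import all_boot all_order all_algebra.
From mathcomp Require Import all_classical all_reals all_analysis.
From mathcomp Require Import complex.
From mathcomp Require Import ring lra.
Import Order.TTheory GRing.Theory Num.Theory.
Import numFieldTopology.Exports numFieldNormedType.Exports.

Set Implicit Arguments.
Unset Strict Implicit.
Unset Printing Implicit Defensive.
Local Open Scope classical_set_scope.
Local Open Scope ring_scope.
Local Open Scope complex_scope.

Section RealScalars.
Variables (R : realType) (V : lmodType (Cplx R)).

Definition rs (a : R) (x : V) : V := ((a%:C : R[i]) : Cplx R) *: x.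

Lemma rsM a b x : rs (a * b) x = rs a (rs b x).
Proof. by rewrite /rs scalerA rmorphM. Qed.

Lemma rsD a b x : rs (a + b) x = rs a x + rs b x.
Proof. by rewrite /rs rmorphD scalerDl. Qed.

Lemma rsB a b x : rs (a - b) x = rs a x - rs b x.
Proof. by rewrite /rs rmorphB scalerBl. Qed.

Lemma rsN a x : rs (- a) x = - rs a x.
Proof. by rewrite /rs rmorphN scaleNr. Qed.

Lemma rs1 x : rs 1 x = x. Proof. by rewrite /rs rmorph1 scale1r. Qed.

Lemma rs0 x : rs 0 x = 0. Proof. by rewrite /rs rmorph0 scale0r. Qed.

Lemma rsN1 x : rs (-1) x = - x. Proof. by rewrite rsN rs1. Qed.

Lemma rsxD a x y : rs a (x + y) = rs a x + rs a y. Proof. by rewrite /rs scalerDr. Qed.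

Lemma rsxN a x : rs a (- x) = - rs a x. Proof. by rewrite /rs scalerN. Qed.

Lemma rsVK a x : a != 0 -> rs a (rs a^-1 x) = x.
Proof. by move=> a0; rewrite -rsM mulfV // rs1. Qed.

Definition rlin (u : V -> R) := forall a x y, u (rs a x + y) = a * u x + u y.

Section RealLinear.
Variables (u : V -> R) (ul : rlin u).

Lemma rlin0 : u 0 = 0.
Proof. by have := ul 1 0 0; rewrite rs1 addr0 mul1r; lra. Qed.

Lemma rlinD x y : u (x + y) = u x + u y.
Proof. by have := ul 1 x y; rewrite rs1 mul1r. Qed.

Lemma rlinZ a x : u (rs a x) = a * u x.
Proof. by have := ul a x 0; rewrite !addr0 rlin0 addr0. Qed.

Lemma rlinN x : u (- x) = - u x.
Proof. by rewrite -rsN1 rlinZ mulN1r. Qed.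

End RealLinear.

End RealScalars.

Section HahnBanach.
Variables (R : realType) (V : lmodType (Cplx R)) (p : V -> R).
Hypothesis p_subadd : forall x y, p (x + y) <= p x + p y.
Hypothesis p_homog : forall a x, 0 < a -> p (rs a x) = a * p x.

(* A partial real functional on V is encoded by its graph G : set (V * R);
   it is a function, real-linear on its domain, and dominated by p. *)
Definition gfun (G : set (V * R)) := forall x r s, G (x, r) -> G (x, s) -> r = s.
Definition glin (G : set (V * R)) :=
  forall a x r y s, G (x, r) -> G (y, s) -> G (rs a x + y, a * r + s).
Definition gdom (G : set (V * R)) := forall x r, G (x, r) -> r <= p x.

Lemma glin0 G x r : glin G -> G (x, r) -> G (0, 0).
Proof.
move=> Gl h; have := Gl (-1) x r x r h h.
by rewrite rsN1 addNr mulN1r addNr.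
Qed.

Lemma glinZ G a x r : glin G -> G (0, 0) -> G (x, r) -> G (rs a x, a * r).
Proof. by move=> Gl G0 h; have := Gl a x r 0 0 h G0; rewrite !addr0. Qed.

Definition adjoin (G : set (V * R)) (z : V) (c : R) : set (V * R) :=
  [set q | exists w s t, G (w, s) /\ q = (w + rs t z, s + t * c)].

Lemma adjoin_sub G z c : G `<=` adjoin G z c.
Proof. by move=> [x r] h; exists x, r, 0; rewrite rs0 mul0r !addr0. Qed.

Lemma adjoin_point G z c : G (0, 0) -> adjoin G z c (z, c).
Proof. by move=> G0; exists 0, 0, 1; rewrite rs1 mul1r !add0r. Qed.

Lemma adjoin_lin G z c : glin G -> glin (adjoin G z c).
Proof.
move=> Gl a x r y s [w1 [s1 [t1 [h1 [-> ->]]]]] [w2 [s2 [t2 [h2 [-> ->]]]]].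
exists (rs a w1 + w2), (a * s1 + s2), (a * t1 + t2); split; first exact: Gl.
by congr pair; [rewrite rsxD rsD rsM addrACA | ring].
Qed.

(* If z lies outside the domain of G, the extension is still a function:
   the coefficient t of z is determined by the point. *)
Lemma adjoin_fun G z c : gfun G -> glin G -> (forall r, ~ G (z, r)) ->
  gfun (adjoin G z c).
Proof.
move=> Gf Gl Gz x r1 r2 [w1 [s1 [t1 [h1 [ex1 ->]]]]] [w2 [s2 [t2 [h2 [ex2 ->]]]]].
have G0 := glin0 Gl h1.
have et : t1 = t2.
  have [//|nt] := eqVneq t1 t2; exfalso.
  have t12 : t1 - t2 != 0 by rewrite subr_eq0.
  have e : rs (t1 - t2) z = w2 - w1.
    rewrite rsB; apply/eqP; rewrite subr_eq; apply/eqP; apply: (addrI w1).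
    by rewrite -ex1 ex2 addrA [w1 + _]addrC subrK.
  have hG : G (w2 - w1, - s1 + s2).
    by have := Gl (-1) _ _ _ _ h1 h2; rewrite rsN1 mulN1r addrC.
  apply: (Gz ((t1 - t2)^-1 * (- s1 + s2))).
  by rewrite -[z](rsVK _ (invr_neq0 t12)) invrK e; exact: glinZ.
subst t2; have ew : w1 = w2 by apply: (addIr (rs t1 z)); rewrite -ex1 -ex2.
by subst w2; rewrite (Gf _ _ _ h1 h2).
Qed.

(* The value c keeps the extension dominated by p as soon as it satisfies
   these bounds against every point of the graph. *)
Definition admissible_value (G : set (V * R)) (z : V) (c : R) :=
  forall w s, G (w, s) -> s - p (w - z) <= c /\ c <= p (w + z) - s.

Lemma adjoin_dom G z c : glin G -> G (0, 0) -> gdom G ->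
  admissible_value G z c -> gdom (adjoin G z c).
Proof.
move=> Gl G0 Gd hc x r [w [s [t [h [-> ->]]]]].
have [t0|t0|->] := ltgtP t 0; last by rewrite rs0 mul0r !addr0; exact: Gd.
- have u0 : 0 < - t by rewrite oppr_gt0.
  have [hlo _] := hc _ _ (glinZ (- t)^-1 Gl G0 h).
  have -> : w + rs t z = rs (- t) (rs (- t)^-1 w - z).
    by rewrite rsxD rsVK ?gt_eqF // rsxN -rsN opprK.
  rewrite p_homog //; have := ler_wpM2l (ltW u0) hlo.
  rewrite mulrBr mulrA mulfV ?gt_eqF // mul1r; lra.
- have [_ hup] := hc _ _ (glinZ t^-1 Gl G0 h).
  have -> : w + rs t z = rs t (rs t^-1 w + z) by rewrite rsxD rsVK ?gt_eqF.
  rewrite p_homog //; have := ler_wpM2l (ltW t0) hup.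
  rewrite mulrBr mulrA mulfV ?gt_eqF // mul1r; lra.
Qed.

(* An admissible value exists: any lower bound s1 - p (w1 - z) is below
   any upper bound p (w2 + z) - s2, so a supremum fits in between. *)
Lemma admissible_value_exists G z : glin G -> gdom G -> G (0, 0) ->
  exists c, admissible_value G z c.
Proof.
move=> Gl Gd G0.
have key w1 s1 w2 s2 : G (w1, s1) -> G (w2, s2) ->
    s1 - p (w1 - z) <= p (w2 + z) - s2.
  move=> h1 h2; have := Gd _ _ (Gl 1 _ _ _ _ h1 h2); rewrite rs1 mul1r.
  have : p (w1 + w2) <= p (w1 - z) + p (w2 + z).
    have -> : w1 + w2 = (w1 - z) + (w2 + z) by rewrite addrACA addNr addr0.
    exact: p_subadd.
  lra.
pose S := [set v | exists w s, G (w, s) /\ v = s - p (w - z)].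
have hS : has_sup S.
  split; first by exists (0 - p (0 - z)), 0, 0.
  by exists (p (0 + z) - 0) => v [w [s [h ->]]]; exact: key.
exists (sup S) => w s h; split.
- by apply: sup_upper_bound => //; exists w, s.
- apply: ge_sup; first by case: hS.
  by move=> v [w1 [s1 [h1 ->]]]; exact: key.
Qed.

Lemma graph_extend G z : gfun G -> glin G -> gdom G -> G (0, 0) ->
  (forall r, ~ G (z, r)) -> exists G', [/\ gfun G', glin G', gdom G' & G `<` G'].
Proof.
move=> Gf Gl Gd G0 Gz; have [c hc] := admissible_value_exists z Gl Gd G0.
exists (adjoin G z c); split.
- exact: adjoin_fun.
- exact: adjoin_lin.
- exact: adjoin_dom.
- split; first exact: adjoin_sub.
  by move=> sub; apply: (Gz c); apply: sub; exact: adjoin_point.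
Qed.

Definition extends_graph (G0 G : set (V * R)) :=
  [/\ gfun G, glin G, gdom G & G0 `<=` G].

(* The union of a chain of such extensions (the empty graph allowed as a
   member) which contains a nonempty member is again one. *)
Lemma chain_union_extends G0 (F : set (set (V * R))) G1 q1 :
  (forall G q, F G -> G q -> extends_graph G0 G) -> total_on F subset ->
  F G1 -> G1 q1 -> extends_graph G0 (\bigcup_(G in F) G).
Proof.
move=> FP tot FG1 G1q; split.
- move=> x r s [Ga Fa ha] [Gb Fb hb].
  have [[fa _ _ _] [fb _ _ _]] := (FP _ _ Fa ha, FP _ _ Fb hb).
  by case: (tot _ _ Fa Fb) => sub; [apply: fb (sub _ ha) hb | apply: fa ha (sub _ hb)].
- move=> a x r y s [Ga Fa ha] [Gb Fb hb].
  have [[_ la _ _] [_ lb _ _]] := (FP _ _ Fa ha, FP _ _ Fb hb).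
  case: (tot _ _ Fa Fb) => sub; [exists Gb => //; exact: lb (sub _ ha) hb|].
  by exists Ga => //; exact: la ha (sub _ hb).
- by move=> x r [Ga Fa ha]; have [_ _ da _] := FP _ _ Fa ha; exact: da.
- by move=> q G0q; exists G1 => //; have [_ _ _ s1] := FP _ _ FG1 G1q; exact: s1.
Qed.

Theorem hahn_banach_real G0 : gfun G0 -> glin G0 -> gdom G0 -> G0 (0, 0) ->
  exists u : V -> R, [/\ rlin u, (forall x, u x <= p x) & (forall x r, G0 (x, r) -> u x = r)].
Proof.
move=> f0 l0 d0 z0.
pose P G := extends_graph G0 G \/ G = set0.
have [A [PA maxA]] : exists A, P A /\ forall B, A `<` B -> ~ P B.
  apply: Zorn_bigcup => F FP tot.
  have [[G1 [FG1 [q1 G1q]]] | none] := pselect (exists G, F G /\ G !=set0).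
    left; apply: (chain_union_extends _ tot FG1 G1q) => G q FG Gq.
    by case: (FP G FG) => // e; move: Gq; rewrite e.
  right; apply/seteqP; split => // q [G FG Gq].
  by apply: none; exists G; split => //; exists q.
have [Af Al Ad As] : extends_graph G0 A.
  case: PA => // A0; exfalso; apply: (maxA G0); last by left; split.
  by rewrite A0; split => // sub; exact: (sub _ z0).
have A0 : A (0, 0) by apply: As.
have tot x : exists r, A (x, r).
  apply/not_existsP => nx.
  have [G' [f' l' d' [AG' nG'A]]] := graph_extend Af Al Ad A0 nx.
  apply: (maxA G'); [by split | left; split => //].
  exact: subset_trans As AG'.
pose u x := xget 0 [set r | A (x, r)].
have hu x : A (x, u x) by exact: (xgetPex 0 (tot x)).
exists u; split.
- by move=> a x y; apply: (Af _ _ _ (hu _)); apply: Al.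
- by move=> x; apply: Ad.
- by move=> x r /As h; apply: (Af _ _ _ (hu _)).
Qed.

End HahnBanach.

Section Separation.
Variables (R : realType) (X : completeNormedModType (Cplx R)).

Definition lin (g : X -> Cplx R) := forall a x v, g (a *: x + v) = a * g x + g v.

Lemma lin0 g : lin g -> g 0 = 0.
Proof.
move=> gl; have := gl 1 0 0; rewrite scaler0 addr0 mul1r => e.
by apply: (addrI (g 0)); rewrite -e addr0.
Qed.

Lemma linN g x : lin g -> g (- x) = - g x.
Proof. by move=> gl; have := gl (-1) x 0; rewrite lin0 // !addr0 scaleN1r mulN1r. Qed.

Definition pn (x : X) : R := complex.Re (`|x| : Cplx R).

Lemma normC_real (r : R) : `|(r%:C : Cplx R)| = (`|r|)%:C.
Proof. by rewrite normc_def /= expr0n /= addr0 sqrtr_sqr. Qed.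

Lemma normi : `|'i : Cplx R| = 1.
Proof. by rewrite normc_def /= expr0n /= add0r expr1n sqrtr1. Qed.

Lemma pnE x : (pn x)%:C = `|x|.
Proof. by rewrite /pn RRe_real // normr_real. Qed.

Lemma pn_ge0 x : 0 <= pn x.
Proof. by rewrite -lecR pnE (rmorph0 (real_complex R)). Qed.

Lemma pnD x y : pn (x + y) <= pn x + pn y.
Proof. by rewrite -lecR rmorphD /= !pnE ler_normD. Qed.

Lemma pnZ a x : pn (rs a x) = `|a| * pn x.
Proof. by apply: complexI; rewrite rmorphM /= !pnE /rs normrZ normC_real. Qed.

Lemma pn_homog a x : 0 < a -> pn (rs a x) = a * pn x.
Proof. by move=> a0; rewrite pnZ gtr0_norm. Qed.

Lemma pn_i x : pn ('i *: x) = pn x.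
Proof. by apply: complexI; rewrite !pnE normrZ normi mul1r. Qed.

Lemma dist_closed (M : set X) y : closed M -> ~ M y ->
  exists2 d : R, 0 < d & forall m, M m -> d <= pn (y - m).
Proof.
move=> Mc My; have : ~ closure M y by move=> /Mc.
move=> /existsNP [B /not_implyP [/nbhs_ballP [e e0 eB] hB]].
have er : (complex.Re e)%:C = e by rewrite RRe_real // gtr0_real.
exists (complex.Re e); first by rewrite -ltcR er (rmorph0 (real_complex R)).
move=> m Mm; rewrite leNgt; apply/negP => lt.
apply: hB; exists m; split => //; apply: eB.
by rewrite -ball_normE /ball_ /= -pnE -er ltcR.
Qed.

Definition zero_graph (M : set X) : set (X * R) := [set q | M q.1 /\ q.2 = 0].

(* Real separation: a real-linear functional bounded by the norm, vanishing
   on M and equal to dist(y, M) > 0 at y. *)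
Lemma real_separation (M : set X) y : closed_subspace M -> ~ M y ->
  exists u : X -> R, [/\ rlin u, (forall x, u x <= pn x), (forall m, M m -> u m = 0) & u y != 0].
Proof.
move=> [[M0 Ml] Mc] My; have [d d0 hd] := dist_closed Mc My.
have Mrs a m : M m -> M (rs a m) by move=> h; have := Ml a%:C m 0 h M0; rewrite addr0.
pose Z := zero_graph M.
have Zf : gfun Z by move=> x r s; rewrite /Z /zero_graph /= => -[_ ->] [_ ->].
have Zl : glin Z.
  move=> a x r v s; rewrite /Z /zero_graph /= => -[Mx ->] [Mv ->].
  split; last by rewrite mulr0 addr0.
  by have := Ml 1 _ _ (Mrs a x Mx) Mv; rewrite scale1r.
have Z0 : Z (0, 0) by [].
have Zy r : ~ Z (y, r) by case.
have Zd : gdom pn Z by move=> x r; rewrite /Z /zero_graph /= => -[_ ->]; exact: pn_ge0.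
have hc : admissible_value pn Z y d.
  move=> w s; rewrite /Z /zero_graph /= => -[Mw ->]; rewrite sub0r subr0; split.
    by apply: le_trans (ltW d0); rewrite oppr_le0 pn_ge0.
  have := hd (- w); rewrite opprK addrC; apply.
  by rewrite -rsN1; exact: Mrs.
pose G := adjoin Z y d.
have Gf : gfun G := adjoin_fun Zf Zl Zy.
have Gl : glin G := adjoin_lin Zl.
have Gd : gdom pn G := adjoin_dom pn_homog Zl Z0 Zd hc.
have G0 : G (0, 0) by apply: adjoin_sub.
have [u [ul ub uG]] := hahn_banach_real pnD pn_homog Gf Gl Gd G0.
exists u; split => //.
- by move=> m Mm; apply: uG; apply: adjoin_sub.
- by rewrite (uG _ _ (adjoin_point y d Z0)) gt_eqF.
Qed.

Definition complexify (u : X -> R) (x : X) : Cplx R :=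
  (u x)%:C - 'i * (u ('i *: x))%:C.

Lemma complexify_lin u : rlin u -> lin (complexify u).
Proof.
move=> ul [a b] x v.
have hc : (a +i* b : R[i]) = a%:C + 'i * b%:C by rewrite [LHS]complexE.
have e1 : (a +i* b : Cplx R) *: x + v = rs a x + (rs b ('i *: x) + v).
  by rewrite hc scalerDl mulrC -scalerA /rs addrA.
have ii : 'i * b%:C * 'i = (- b)%:C :> R[i].
  by rewrite mulrC mulrA -expr2 sqr_i mulN1r rmorphN.
have e2 : 'i *: ((a +i* b : Cplx R) *: x + v) = rs a ('i *: x) + (rs (- b) x + 'i *: v).
  by rewrite e1 !scalerDr /rs !scalerA mulrC ii.
rewrite /complexify e2 e1 !(rlinD ul) !(rlinZ ul) hc; apply/eqP; rewrite eq_complex /=.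
by apply/andP; split; apply/eqP; ring.
Qed.

Lemma bounded_lin_continuous (g : X -> Cplx R) (k : Cplx R) : 0 < k ->
  lin g -> (forall x, `|g x| <= k * `|x|) -> continuous g.
Proof.
move=> k0 gl gb x; apply/cvgrPdist_lt => e e0.
have ek : 0 < e / k by rewrite divr_gt0.
have := proj1 (cvgrPdist_lt (@id X) x) cvg_id (e / k) ek.
move=> /(_ (nbhs_filter x)); apply: filterS => t ht.
have -> : g x - g t = g (x - t) by have := gl 1 x (- t); rewrite scale1r mul1r linN.
apply: le_lt_trans (gb _) _.
by rewrite -ltr_pdivlMl // mulrC.
Qed.

Theorem separation (M : set X) y : closed_subspace M -> ~ M y ->
  exists g : X -> Cplx R, [/\ dual_elt g, (forall m, M m -> g m = 0) & g y != 0].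
Proof.
move=> hM My; have [u [ul ub uM uy]] := real_separation hM My.
have [[M0 Ml] _] := hM.
have uabs x : `|u x| <= pn x.
  rewrite ler_norml ub andbT lerNl -(rlinN ul); apply: le_trans (ub _) _.
  by rewrite -rsN1 pnZ normrN normr1 mul1r.
exists (complexify u); split.
- split; first exact: complexify_lin.
  apply: (bounded_lin_continuous (k := 2) _ (complexify_lin ul)) => // x.
  apply: le_trans (ler_normB _ _) _.
  rewrite normrM normi mul1r !normC_real.
  have -> : 2 * `|x| = (pn x + pn x)%:C by rewrite rmorphD /= !pnE mulr_natl mulr2n.
  by rewrite -rmorphD lecR; apply: lerD => //; rewrite -(pn_i x).
- move=> m Mm; rewrite /complexify !uM ?(rmorph0 (real_complex R)) ?mulr0 ?subr0 //.
  by have := Ml 'i m 0 Mm M0; rewrite addr0.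
- apply: contra uy => /eqP h; have := congr1 (@complex.Re R) h.
  by rewrite /complexify /= mul0r mulr0 subrr subr0 => ->.
Qed.

End Separation.

Section RowSpaces.
Variables (K : fieldType) (n : nat) (L : set 'rV[K]_n).
Hypothesis L0 : L 0.
Hypothesis Llin : forall a l l', L l -> L l' -> L (a *: l + l').

(* L is the row space of a matrix whose rows lie in L; the rank bound n
   stops the search for a spanning family. *)
Lemma subspace_row_span : exists m (A : 'M[K]_(m, n)),
  (forall i, L (row i A)) /\ forall l, L l -> (l <= A)%MS.
Proof.
apply/not_existsP => H.
suff /(_ n.+1) [m [A [_ hr]]] : forall k, exists m (A : 'M[K]_(m, n)),
    (forall i, L (row i A)) /\ (k <= \rank A)%N.
  by have := leq_trans hr (rank_leq_col A); rewrite ltnn.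
elim=> [|k [m [A [hA hr]]]]; first by exists 0%N, 0; split => // -[].
have /existsNP [l /not_implyP [Ll nsub]] : ~ (forall l, L l -> (l <= A)%MS).
  by move=> h; apply: (H m); exists A.
exists (m + 1)%N, (col_mx A l); split.
  move=> i; case: (splitP i) => j ij.
    by rewrite (_ : i = lshift 1 j) ?rowKu //; apply/val_inj.
  rewrite (_ : i = rshift m j) ?rowKd; last by apply/val_inj.
  by rewrite ord1 (_ : row 0 l = l) //; apply/rowP => q; rewrite mxE.
have /andP [sA _] : (A <= col_mx A l)%MS && (l <= col_mx A l)%MS.
  by rewrite -col_mx_sub submx_refl.
have := ltn_leqif (mxrank_leqif_sup sA).
rewrite col_mx_sub negb_and (negbTE (introN idP nsub)) orbT => lt.
by apply: leq_trans lt; rewrite ltnS.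
Qed.

Lemma row_subspace_separation v : ~ L v ->
  exists C : 'M[K]_n, (forall l, L l -> l *m C = 0) /\ v *m C != 0.
Proof.
move=> nv; have [m [A [hA hsub]]] := subspace_row_span.
exists (cokermx A); split; first by move=> l /hsub; rewrite submxE => /eqP.
apply/negP; rewrite -submxE => /submxP [D eD]; apply: nv.
rewrite eD mulmx_sum_row; elim/big_ind: _ => //.
- by move=> l l' h h'; have := Llin 1 h h'; rewrite scale1r.
- by move=> i _; have := Llin (D 0 i) (hA i) L0; rewrite addr0.
Qed.

End RowSpaces.

Section Functionals.
Variables (R : realType) (X : completeNormedModType (Cplx R)).

Lemma lin_sum (g : X -> Cplx R) n (c : 'I_n -> Cplx R) (xs : 'I_n -> X) : lin g ->
  g (\sum_(i < n) c i *: xs i) = \sum_(i < n) c i * g (xs i).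
Proof.
move=> gl; have gD : {morph g : x y / x + y >-> x + y}.
  by move=> x y; have := gl 1 x y; rewrite scale1r mul1r.
rewrite (big_morph g gD (lin0 gl)); apply: eq_bigr => i _.
by have := gl (c i) (xs i) 0; rewrite (lin0 gl) !addr0.
Qed.

Lemma fspan0 (S : set (X -> Cplx R)) : fspan S (fun _ => 0).
Proof.
exists 0%N, (fun _ => 0), (fun _ _ => 0); split; first by case.
by apply: funext => x; rewrite big_ord0.
Qed.

Lemma fspan1 (S : set (X -> Cplx R)) g : S g -> fspan S g.
Proof.
move=> Sg; exists 1%N, (fun _ => 1), (fun _ => g); split => //.
by apply: funext => x; rewrite big_ord1 mul1r.
Qed.

Lemma fspan_comb (S : set (X -> Cplx R)) a g h : fspan S g -> fspan S h ->
  fspan S (fun x => a * g x + h x).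
Proof.
move=> [n [c [f [hf ->]]]] [m [c' [f' [hf' ->]]]].
pose cc (i : 'I_(n + m)) :=
  match fintype.split i with inl j => a * c j | inr j => c' j end.
pose ff (i : 'I_(n + m)) :=
  match fintype.split i with inl j => f j | inr j => f' j end.
exists (n + m)%N, cc, ff; split; first by move=> i; rewrite /ff; case: fintype.split.
apply: funext => x; rewrite big_split_ord /= mulr_sumr; congr (_ + _).
  by apply: eq_bigr => i _; rewrite /cc /ff (unsplitK (inl i)) mulrA.
by apply: eq_bigr => i _; rewrite /cc /ff (unsplitK (inr i)).
Qed.

Lemma fspan_lin (S : set (X -> Cplx R)) g : (forall h, S h -> lin h) ->
  fspan S g -> lin g.
Proof.
move=> hS [n [c [f [hf ->]]]] a x v /=.
rewrite mulr_sumr -big_split /=; apply: eq_bigr => i _.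
by rewrite (hS _ (hf i)) mulrDr mulrCA.
Qed.

Lemma fspan_vanish (S : set (X -> Cplx R)) (E : set X) :
  (forall h, S h -> forall s, E s -> h s = 0) ->
  forall g, fspan S g -> forall s, E s -> g s = 0.
Proof.
move=> hS g [n [c [f [hf ->]]]] s Es.
by rewrite big1 // => i _; rewrite (hS _ (hf i) s Es) mulr0.
Qed.

Lemma wstar_closure_perp (S : set (X -> Cplx R)) (E : set X) :
  (forall g, S g -> forall s, E s -> g s = 0) -> wstar_closure S `<=` perp E.
Proof.
move=> hS f [df hf]; split => // s Es; apply/eqP/negP => /negP fs.
have fs0 : 0 < `|f s| by rewrite normr_gt0.
have [g [Sg hgs]] := hf 1%N (fun _ => s) `|f s| fs0.
by have := hgs ord0; rewrite (hS g Sg s Es) subr0 ltxx.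
Qed.

(* On the points
   x_1..x_n of a weak*-neighbourhood f even agrees with a member of the
   span, for otherwise a linear map C on C^n separates the values of f from
   those of the span, and y = sum_i C_ij x_i is annihilated by the span
   but not by f. *)
Lemma wstar_closure_fspan (U : set (X -> Cplx R)) f :
  (forall h, U h -> lin h) -> dual_elt f ->
  (forall y, (forall g, fspan U g -> g y = 0) -> f y = 0) ->
  wstar_closure (fspan U) f.
Proof.
move=> Ulin df fann; split => // n xs eps eps0.
pose ev (g : X -> Cplx R) := \row_i g (xs i) : 'rV[Cplx R]_n.
pose L := [set l | exists g, fspan U g /\ l = ev g].
have [[g [hg efg]] | nv] := pselect (L (ev f)).
  exists g; split => // i; have := congr1 (fun w : 'rV_n => w 0 i) efg.
  by rewrite !mxE => ->; rewrite subrr normr0.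
exfalso.
have L0 : L 0.
  by exists (fun _ => 0); split; [exact: fspan0 | apply/rowP => i; rewrite !mxE].
have Llin a l l' : L l -> L l' -> L (a *: l + l').
  move=> [g [hg ->]] [h [hh ->]]; exists (fun x => a * g x + h x).
  by split; [exact: fspan_comb | apply/rowP => i; rewrite !mxE].
have [C [hC fC]] := row_subspace_separation L0 Llin nv.
have [j fj] : exists j, (ev f *m C) 0 j != 0.
  apply/not_existsP => hn; move/eqP: fC; apply; apply/rowP => k.
  by rewrite [RHS]mxE; apply/eqP/negPn/negP; exact: hn.
pose y := \sum_(i < n) C i j *: xs i.
have evalC g : lin g -> g y = (ev g *m C) 0 j.
  by move=> gl; rewrite lin_sum // !mxE; apply: eq_bigr => i _; rewrite !mxE mulrC.
move/eqP: fj; apply; rewrite -evalC; last exact: df.1.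
apply: fann => g hg; rewrite evalC; last exact: fspan_lin Ulin hg.
by rewrite (hC _ (ex_intro _ g (conj hg erefl))) mxE.
Qed.

End Functionals.

Section NestFacts.
Variables (R : realType) (X : completeNormedModType (Cplx R)) (N : set (set X)).

Lemma nest_succ_super (Y : set X) : Y `<=` nest_succ N Y.
Proof. by move=> x Yx A [NA [sub _]]; exact: sub _ Yx. Qed.

(* In a totally ordered family, E strictly below M_+ forces E <= M:
   otherwise M would be strictly below E, so M_+ <= E. *)
Lemma nest_below_succ (E M : set X) :
  (forall A B, N A -> N B -> A `<=` B \/ B `<=` A) -> N M -> N E ->
  E `<` nest_succ N M -> E `<=` M.
Proof.
move=> Ntot NM NE [_ nsub]; have [//|ME] := Ntot E M NE NM.
case: (pselect (E `<=` M)) => // nEM; exfalso; apply: nsub.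
by move=> x hx; apply: hx; split => //; split.
Qed.

(* A point outside E is missed by some M with E strictly below M_+: either
   M = E works, or E_+ = E and some member strictly above E misses y. *)
Lemma nest_separating_member (E : set X) y : N E -> ~ E y ->
  exists M, [/\ N M, E `<` nest_succ N M & ~ M y].
Proof.
move=> NE nEy; have [hE | nE] := pselect (E `<` nest_succ N E); first by exists E.
have sE : nest_succ N E `<=` E.
  by apply: contra_notP nE => h; split; [exact: nest_succ_super | exact: h].
have /existsNP [F /not_implyP [[NF [EF nFE]] nFy]] : ~ nest_succ N E y by move/sE.
exists F; split => //; split; first exact: subset_trans EF (@nest_succ_super F).
by move=> h; apply: nFE; apply: subset_trans (@nest_succ_super F) h.
Qed.

End NestFacts.

Theorem mainTheorem2 (R : realType) (X : completeNormedModType (Cplx R))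
    (N : set (set X)) (E : set X) :
  nest N -> N E ->
  wstar_closure (fspan (\bigcup_(M in [set M | N M /\ E `<` nest_succ N M]) perp M))
  = perp E.
Proof.
move=> [Ncl [Ntot _]] NE.
set U := \bigcup_(M in _) _.
have Uvan h : U h -> forall s, E s -> h s = 0.
  move=> [M [NM EM] [_ hM]] s Es; apply: hM.
  exact: nest_below_succ Ntot NM NE EM _ Es.
apply/seteqP; split; first exact/wstar_closure_perp/fspan_vanish.
move=> f [df fE]; apply: wstar_closure_fspan => // [h [M _ [[hl _] _]] // | y yann].
apply/eqP/negP => fy; have nEy : ~ E y by move/fE/eqP.
have [M [NM EM My]] := nest_separating_member NE nEy.
have [g [dg gM gy]] := separation (Ncl M NM) My.
by move: gy; rewrite yann ?eqxx //; apply: fspan1; exists M => //; split.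
Qed.
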